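(* Let $d=2$, let $a$ be feasible (a scalar function with $a\ge\alpha$ a.e., $a\in L^\infty(\Omega)$), with state $y$ and adjoint $p$. Suppose that for almost all $x_0\in\Omega$ and all $b\ge\alpha$, \[ -(b-a(x_0))\nabla y(x_0)\cdot\nabla p(x_0)+g(b)-g(a(x_0))+\frac12\frac{(b-a(x_0))^2}{b}\Big(\nabla y(x_0)\cdot\nabla p(x_0)-\|\nabla y(x_0)\|_2\|\nabla p(x_0)\|_2\Big)\ge0. \] Then for almost all $x_0\in\Omega$ and all $b\ge\alpha$, \[ -(b-a(x_0))\nabla y(x_0)\cdot\nabla p(x_0)\,\frac{a(x_0)\,d}{b+a(x_0)(d-1)}+g(b)-g(a(x_0))\ge0. \]
   Context: $\Omega\subset\mathbb R^2$ bounded domain, $\alpha>0$, $y_d,f\in L^2(\Omega)$, $g:[\alpha,\infty)\to\mathbb R\cup\{+\infty\}$ lower semicontinuous. The state $y\in H^1_0(\Omega)$ solves $\int_\Omega a\nabla y\cdot\nabla v=\int_\Omega fv$ and the adjoint $p\in H^1_0(\Omega)$ solves $\int_\Omega a\nabla v\cdot\nabla p=\int_\Omega(y-y_d)v$, for all $v\in H^1_0(\Omega)$. *)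

From HB Require Import structures.
From mathcomp Require Import all_boot all_order all_algebra.
From mathcomp Require Import all_classical all_reals all_analysis.
Set Implicit Arguments. Unset Strict Implicit. Unset Printing Implicit Defensive.
Import Order.TTheory GRing.Theory Num.Theory.
Import numFieldNormedType.Exports.
Local Open Scope classical_set_scope.
Local Open Scope ring_scope.

(* The plane R^2 is modelled as R * R, with the 2-dimensional Lebesgue
   measure given as the product of the one-dimensional Lebesgue measures. *)
Definition leb2 (R : realType) := ((@lebesgue_measure R) \x (@lebesgue_measure R))%E.

Definition dot2 (R : realType) (u v : R * R) : R := u.1 * v.1 + u.2 * v.2.
Definition norm2 (R : realType) (u : R * R) : R := Num.sqrt (u.1 ^+ 2 + u.2 ^+ 2).

Definition d1 (R : realType) (phi : R * R -> R) (x : R * R) : R := 'D_((1 : R), (0 : R)) phi x.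
Definition d2 (R : realType) (phi : R * R -> R) (x : R * R) : R := 'D_((0 : R), (1 : R)) phi x.

Definition testfun (R : realType) (Omega : set (R * R)) (phi : R * R -> R) : Prop :=
  (forall x, differentiable phi x) /\ continuous (d1 phi) /\ continuous (d2 phi) /\
  exists K : set (R * R), [/\ compact K, K `<=` Omega & forall x, ~ K x -> phi x = 0].

(* y belongs to H^1_0(Omega) with weak gradient G: y and G are measurable on
   Omega and (y, G) is the H^1-limit of (phi_n, grad phi_n) for test functions
   phi_n, i.e. H^1_0 is the closure of C_c^1(Omega) in H^1(Omega). *)
Definition H10 (R : realType) (Omega : set (R * R)) (y : R * R -> R) (G : R * R -> R * R) : Prop :=
  [/\ measurable_fun Omega y, measurable_fun Omega (fun x => (G x).1),
      measurable_fun Omega (fun x => (G x).2) &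
  exists phi : nat -> R * R -> R, (forall n, testfun Omega (phi n)) /\
    ((fun n => (\int[@leb2 R]_(x in Omega)
        ((phi n x - y x) ^+ 2 + (d1 (phi n) x - (G x).1) ^+ 2
         + (d2 (phi n) x - (G x).2) ^+ 2)%:E)%E) @ \oo --> 0%E)].

Definition L2 (R : realType) (Omega : set (R * R)) (f : R * R -> R) : Prop :=
  measurable_fun Omega f /\ (\int[@leb2 R]_(x in Omega) (f x ^+ 2)%:E < +oo)%E.

Definition lsc_on_half (R : realType) (alpha : R) (g : R -> \bar R) : Prop :=
  forall b, alpha <= b -> forall e : \bar R, (e < g b)%E ->
    \forall c \near b, alpha <= c -> (e < g c)%E.

From HB Require Import structures.
From mathcomp Require Import all_boot all_order all_algebra.
From mathcomp Require Import all_classical all_reals all_analysis.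
From mathcomp Require Import ring lra.
Import Order.TTheory GRing.Theory Num.Theory.
Import numFieldNormedType.Exports.
Local Open Scope classical_set_scope.
Local Open Scope ring_scope.

(* The statement is pointwise.  Writing s = grad y . grad p and
   N = |grad y| |grad p|, the conclusion minus the hypothesis equals
   (b - a)^2 ((b - a) s + (b + a) N) / (2 b (b + a)), which is nonnegative
   because |s| <= N (Cauchy-Schwarz) and |b - a| <= b + a. *)

Lemma normr_dot2_le (R : realType) (u v : R * R) : `|dot2 u v| <= norm2 u * norm2 v.
Proof.
rewrite /dot2 /norm2 -sqrtrM; last by rewrite addr_ge0 // sqr_ge0.
rewrite -sqrtr_sqr ler_sqrt; last by rewrite mulr_ge0 // addr_ge0 // sqr_ge0.
have -> : (u.1 ^+ 2 + u.2 ^+ 2) * (v.1 ^+ 2 + v.2 ^+ 2)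
        = (u.1 * v.1 + u.2 * v.2) ^+ 2 + (u.1 * v.2 - u.2 * v.1) ^+ 2 by ring.
by rewrite lerDl sqr_ge0.
Qed.

Lemma mul_sub_add_norm_ge0 (R : realFieldType) (a b s N : R) :
  0 < a -> 0 < b -> `|s| <= N -> 0 <= (b - a) * s + (b + a) * N.
Proof.
move=> a_gt0 b_gt0 s_le_N.
have ab_le : `|b - a| <= b + a by rewrite ler_norml; apply/andP; split; lra.
have : `|(b - a) * s| <= (b + a) * N by rewrite normrM ler_pM.
rewrite ler_norml => /andP[+ _]; lra.
Qed.

Lemma second_order_term_le (R : realFieldType) (a b s N : R) :
  0 < a -> 0 < b -> `|s| <= N ->
  - (b - a) * s + (b - a) ^+ 2 / b / 2 * (s - N)
    <= - (b - a) * s * (2 * a / (b + a)).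
Proof.
move=> a_gt0 b_gt0 s_le_N.
have -> : - (b - a) * s * (2 * a / (b + a))
  = - (b - a) * s + (b - a) ^+ 2 / b / 2 * (s - N)
    + (b - a) ^+ 2 * ((b - a) * s + (b + a) * N) / (2 * b * (b + a)).
  by field; apply/andP; split; lra.
rewrite lerDl divr_ge0 //.
  by rewrite mulr_ge0 ?sqr_ge0 ?mul_sub_add_norm_ge0.
by rewrite !mulr_ge0 //; lra.
Qed.

Lemma adde_EFin_ge0_le (R : realDomainType) (x z w : R) (G : \bar R) :
  x + z <= w -> (0 <= x%:E + G + z%:E)%E -> (0 <= w%:E + G)%E.
Proof.
move=> xzw; case: G => [r| |] /=.
- by rewrite -!EFinD !lee_fin; lra.
- by rewrite addey.
- by rewrite addeNy addNye leeNy_eq.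
Qed.

Theorem mainTheorem19 (R : realType) (Omega : set (R * R)) (alpha : R)
  (yd f : R * R -> R) (g : R -> \bar R)
  (a y p : R * R -> R) (Gy Gp : R * R -> R * R) :
  open Omega -> connected Omega -> Omega !=set0 -> bounded_set Omega ->
  measurable Omega ->
  0 < alpha ->
  L2 Omega yd -> L2 Omega f ->
  (forall b, alpha <= b -> g b != -oo%E) -> lsc_on_half alpha g ->
  measurable_fun Omega a ->
  (exists M : R, {ae @leb2 R, forall x, Omega x -> alpha <= a x <= M}) ->
  H10 Omega y Gy ->
  (forall v Gv, H10 Omega v Gv ->
     (\int[@leb2 R]_(x in Omega) (a x * dot2 (Gy x) (Gv x))%:E
      = \int[@leb2 R]_(x in Omega) (f x * v x)%:E)%E) ->
  H10 Omega p Gp ->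
  (forall v Gv, H10 Omega v Gv ->
     (\int[@leb2 R]_(x in Omega) (a x * dot2 (Gv x) (Gp x))%:E
      = \int[@leb2 R]_(x in Omega) ((y x - yd x) * v x)%:E)%E) ->
  {ae @leb2 R, forall x0, Omega x0 -> forall b, alpha <= b ->
     (0 <= (- (b - a x0) * dot2 (Gy x0) (Gp x0))%:E + (g b - g (a x0))
       + ((b - a x0) ^+ 2 / b / 2
          * (dot2 (Gy x0) (Gp x0) - norm2 (Gy x0) * norm2 (Gp x0)))%:E)%E} ->
  {ae @leb2 R, forall x0, Omega x0 -> forall b, alpha <= b ->
     (0 <= (- (b - a x0) * dot2 (Gy x0) (Gp x0)
            * ((a x0 * 2) / (b + a x0 * (2 - 1))))%:E
       + (g b - g (a x0)))%E}.
Proof.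
move=> _ _ _ _ _ alpha_gt0 _ _ _ _ _ [M a_bounded] _ _ _ _ hyp.
have ae_filter := @ae_filter_ringOfSetsType _ _ R (@leb2 R).
apply: filterS2 a_bounded hyp => x a_ge hyp_x Ox b b_ge.
have /andP[alpha_le_a _] := a_ge Ox.
apply: adde_EFin_ge0_le (hyp_x Ox b b_ge).
have two_sub1 : 2 - 1 = 1 :> R by lra.
rewrite two_sub1 mulr1 (mulrC (a x) 2).
apply: second_order_term_le; [lra | lra | exact: normr_dot2_le].
Qed.
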